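(* Let $\mathcal{H}=\mathbb{R}^3$ with points written $(\mathbf{x},y)$, $\mathbf{x}=(x_1,x_2)\in\mathbb{R}^2$, $y\in\mathbb{R}$, be the Heisenberg group with product $(\mathbf{x},y)\cdot(\mathbf{a},b)=(\mathbf{x}+\mathbf{a},\,y+b+x_1a_2)$, let $\Gamma=\{(\mathbf{x},y):\mathbf{x}\in\mathbb{Z}^2,\ y\in\tfrac12\mathbb{Z}\}$ and $N=\mathcal{H}/\Gamma$ with projection $\pi$. Let $\Phi(\mathbf{x},y)=(B\mathbf{x},\,y+x_1^2+\tfrac12x_2^2+x_1x_2)$ with $B=\begin{pmatrix}2&1\\1&1\end{pmatrix}$, and let $f\colon N\to N$ be the diffeomorphism with $f\circ\pi=\pi\circ\Phi$. Then $f$ is partially hyperbolic with splitting $TN=E^s\oplus E^c\oplus E^u$, and the bundle $E^{cu}=E^c\oplus E^u$ is trivial, with global frame given (in the fundamental domain $\{0\le x_1,x_2\le1,\ 0\le y\le\tfrac12\}$) by $v_1=(\mathbf{0},1)$ and $v_2=(\mathbf{v}^u_B,x_2q_1)$, where $\mathbf{v}^u_B=(q_1,q_2)$ is an eigenvector of $B$ for its eigenvalue $>1$. For $\theta\in\mathbb{R}$ define the cocycle $F_\theta\colon TN\to TN$ over $f$ by $F_\theta(p,v)=(f(p),Df(p)R_\theta v)$ for $v\in E^{cu}(p)$ and $F_\theta(p,v)=(f(p),Df(p)v)$ for $v\in E^s(p)$, where $R_\theta$ acts on each fiber of $E^{cu}$ as the rotation by angle $\theta$ in the coordinates of the frame $(v_2,v_1)$.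 Then there is a non-empty open set $\mathcal{I}\subseteq[0,2\pi]$ such that for every $\theta\in\mathcal{I}$ the cocycle $F_\theta$ is partially hyperbolic with an invariant splitting $TN=E^s_\theta\oplus E^c_\theta\oplus E^u_\theta$, and $F_\theta$ is non-uniformly hyperbolic (all its Lyapunov exponents with respect to the Lebesgue (Haar) measure on $N$ are non-zero).
   Context: The Lebesgue measure on $N$ is $f$-invariant and ergodic. The derivative cocycle $F=F_0$, $F(p,v)=(f(p),Df(p)v)$, has Lyapunov exponents $-\lambda^u=\lambda^s<\lambda^c=0<\lambda^u$. A cocycle on $TN$ over $f$ is called partially hyperbolic with splitting $E^s\oplus E^c\oplus E^u$ if this is a continuous invariant splitting into line bundles with $E^s$ uniformly contracted, $E^u$ uniformly expanded, and each bundle dominated by the next one. *)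

From HB Require Import structures.
From mathcomp Require Import all_boot all_order all_algebra.
From mathcomp Require Import all_classical all_reals all_analysis.
Set Implicit Arguments. Unset Strict Implicit. Unset Printing Implicit Defensive.
Import Order.TTheory GRing.Theory Num.Theory.
Import numFieldNormedType.Exports.
Local Open Scope classical_set_scope.
Local Open Scope ring_scope.

(* N = H/Gamma is handled through its universal cover H: objects on N   *)
(* are Gamma-equivariant objects on H, and TN is handled via            *)
(* T_pH = R^3 (standard coordinates), column vectors 'cV_3.            *)

Section Heis.
Variable R : realType.

Definition pt := ((R * R) * R)%type.
Definition vec := 'cV[R]_3.
Definition mat := 'M[R]_3.

Definition vec3 (a b c : R) : vec := \col_(i < 3) nth 0 [:: a; b; c] i.
Definition mat3 (r1 r2 r3 : seq R) : mat :=
  \matrix_(i < 3, j < 3) nth 0 (nth [::] [:: r1; r2; r3] i) j.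

Definition hmul (p g : pt) : pt :=
  ((p.1.1 + g.1.1, p.1.2 + g.1.2), p.2 + g.2 + p.1.1 * g.1.2).

Definition gam (a1 a2 k : int) : pt := ((a1%:~R, a2%:~R), k%:~R / 2).

(* N = H/Gamma (right cosets p.Gamma); the derivative of the deck
   transformation p |-> p.g in standard coordinates *)
Definition DRmul (g : pt) : mat := mat3 [:: 1; 0; 0] [:: 0; 1; 0] [:: g.1.2; 0; 1].

Definition fundD : set pt :=
  [set p | (0 <= p.1.1 <= 1) && (0 <= p.1.2 <= 1) && (0 <= p.2 <= 2^-1)].

Definition Phi (p : pt) : pt :=
  ((2 * p.1.1 + p.1.2, p.1.1 + p.1.2),
   p.2 + p.1.1 ^+ 2 + p.1.2 ^+ 2 / 2 + p.1.1 * p.1.2).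

(* Jacobian of Phi in standard coordinates = Df(pi p) *)
Definition DPhi (p : pt) : mat :=
  mat3 [:: 2; 1; 0] [:: 1; 1; 0] [:: 2 * p.1.1 + p.1.2; p.1.1 + p.1.2; 1].

(* A Gamma-invariant (indeed right-invariant) Riemannian norm on TH,
   hence a Riemannian norm on TN: the right-invariant frame
   (e1 + x2 d_y, e2, d_y) is declared orthonormal. *)
Definition nrm (p : pt) (v : vec) : R :=
  Num.sqrt (v 0 0 ^+ 2 + v 1 0 ^+ 2 + (v 2 0 - p.1.2 * v 0 0) ^+ 2).

(* a cocycle on TN over f, given by its matrices on the cover *)
Definition cocycle := pt -> mat.

Fixpoint cociter (A : cocycle) (n : nat) (p : pt) : mat :=
  match n with
  | 0 => 1%:M
  | n'.+1 => A (iter n' Phi p) *m cociter A n' p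
  end.

Definition span1 (u : vec) : set vec := [set t *: u | t in [set: R]].

Definition line_field := pt -> set vec.

Definition cont_line_bundle (E : line_field) : Prop :=
  (forall p : pt, exists2 U : set pt, nbhs (p : (R * R) * R)%type U &
     exists e : pt -> vec,
       (forall i, continuous (fun q : (R * R) * R => e q i 0)) /\
       (forall q, U q -> e q != 0 /\ E q = span1 (e q))) /\
  (forall p (a1 a2 k : int),
     E (hmul p (gam a1 a2 k)) = [set DRmul (gam a1 a2 k) *m v | v in E p]).

Definition invariant (A : cocycle) (E : line_field) : Prop :=
  forall p, [set A p *m v | v in E p] = E (Phi p).

Definition part_hyp (A : cocycle) (Es Ec Eu : line_field) : Prop :=
  [/\ (cont_line_bundle Es /\ cont_line_bundle Ec /\ cont_line_bundle Eu),
      (invariant A Es /\ invariant A Ec /\ invariant A Eu),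
      ((forall p (v : vec), exists a b c,
          [/\ Es p a, Ec p b, Eu p c & v = a + b + c]) /\
      (forall p a b c, Es p a -> Ec p b -> Eu p c -> a + b + c = 0 ->
          [/\ a = 0, b = 0 & c = 0])) &
      exists C lam : R, [/\ 0 < C, 0 < lam, lam < 1 &
      forall p n,
       (forall u, Es p u ->
          nrm (iter n Phi p) (cociter A n p *m u) <= C * lam ^+ n * nrm p u) /\
       (forall u, Eu p u ->
          nrm p u <= C * lam ^+ n * nrm (iter n Phi p) (cociter A n p *m u)) /\
       (forall u w, Es p u -> Ec p w ->
          nrm (iter n Phi p) (cociter A n p *m u) * nrm p w <=
          C * lam ^+ n * (nrm (iter n Phi p) (cociter A n p *m w) * nrm p u)) /\
       (forall u w, Ec p u -> Eu p w ->
          nrm (iter n Phi p) (cociter A n p *m u) * nrm p w <=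
          C * lam ^+ n * (nrm (iter n Phi p) (cociter A n p *m w) * nrm p u))]].

(* Lebesgue (Haar) measure on N, realised on the fundamental domain *)
Definition leb3 := (((@lebesgue_measure R) \x (@lebesgue_measure R)) \x
                   (@lebesgue_measure R))%E.

Definition nonunif_hyp (A : cocycle) : Prop :=
  \forall p \ae leb3, fundD p ->
    forall v : vec, v != 0 ->
      exists L : R, L != 0 /\
        (fun n : nat => (n%:R)^-1 * ln (nrm (iter n Phi p) (cociter A n p *m v)))
          @ \oo --> L.

(* The stable bundle of f: spanned by the right-invariant field
   (s, x2 s1) with s = (1, lam_s - 2) an eigenvector of B for
   lam_s = (3 - sqrt 5)/2 < 1. *)
Definition lam_s : R := (3 - Num.sqrt 5) / 2.
Definition ws (p : pt) : vec := vec3 1 (lam_s - 2) (p.1.2 * 1).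
Definition Es_f : line_field := fun p => span1 (ws p).

Definition v1 : vec := vec3 0 0 1.
Definition v2 (q1 q2 : R) (p : pt) : vec := vec3 q1 q2 (p.1.2 * q1).

Definition span2 (a b : vec) : set vec := [set s *: a + t *: b | s in [set: R] & t in [set: R]].

Definition frame (q1 q2 : R) (p : pt) : mat :=
  \matrix_(i < 3, j < 3)
    (if j == 0 :> nat then ws p i 0 else if j == 1 :> nat then v2 q1 q2 p i 0
     else v1 i 0).

(* R_theta on E^cu in coordinates of (v2,v1), identity on E^s *)
Definition Rblk (th : R) : mat :=
  mat3 [:: 1; 0; 0] [:: 0; cos th; - sin th] [:: 0; sin th; cos th].

Definition Ftheta (q1 q2 th : R) : cocycle :=
  fun p => DPhi p *m (frame q1 q2 p *m Rblk th *m invmx (frame q1 q2 p)).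

End Heis.

From Pilot Require Import Defs.
From HB Require Import structures.
From mathcomp Require Import all_boot all_order all_algebra.
From mathcomp Require Import all_classical all_reals all_analysis.
From mathcomp Require Import ring lra.
Set Implicit Arguments. Unset Strict Implicit. Unset Printing Implicit Defensive.

(* In the right-invariant frame (ws, v2, v1) the Riemannian norm has constant
   coefficients, and Df and F_theta act by the constant matrices
   diag(lam_s) + diag(lam_u, 1) and diag(lam_s) + diag(lam_u, 1) R_theta.
   For 0 < theta < acos (9/10) the 2x2 block has real eigenvalues
   1 < mu_c < mu_u, so in the eigenframe both cocycles are diagonal with
   constant rates lam_s < 1 <= mu_c < mu_u (mu_c = 1 for Df).  Being conformal
   on each eigenline gives partial hyperbolicity with C = 1, and the iterates
   of a nonzero vector grow like the largest rate whose coordinate does not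
   vanish, so its Lyapunov exponent is the logarithm of that rate. *)
Import Order.TTheory GRing.Theory Num.Theory.
Import numFieldNormedType.Exports.
Local Open Scope classical_set_scope.
Local Open Scope ring_scope.

Section Coordinates.
Variable R : realType.

Lemma vec3_eta (v : vec R) : v = vec3 (v 0 0) (v 1 0) (v 2 0).
Proof.
apply/matrixP => i j; rewrite !mxE (ord1 j).
by case: i => [[|[|[|]]]] //= Hi; congr (v _ _); apply/val_inj.
Qed.

Lemma vec3_inj (a b c a' b' c' : R) :
  vec3 a b c = vec3 a' b' c' -> [/\ a = a', b = b' & c = c'].
Proof.
move=> E; have Ei i := congr1 (fun v : vec R => v i 0) E.
by move: (Ei 0) (Ei 1) (Ei 2); rewrite !mxE.
Qed.

Lemma vec3_0 : vec3 0 0 0 = 0 :> vec R.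
Proof. by apply/matrixP => i j; rewrite !mxE; case: i => [[|[|[|]]]]. Qed.

Lemma vec3D (a b c a' b' c' : R) :
  vec3 a b c + vec3 a' b' c' = vec3 (a + a') (b + b') (c + c').
Proof. by apply/matrixP => i j; rewrite !mxE; case: i => [[|[|[|]]]]. Qed.

Lemma vec3Z (t a b c : R) : t *: vec3 a b c = vec3 (t * a) (t * b) (t * c).
Proof.
by apply/matrixP => i j; rewrite !mxE; case: i => [[|[|[|]]]] //= _; rewrite mulr0.
Qed.

Lemma mul_mat3_vec3 (a b c d e f g h k x y z : R) :
  mat3 [:: a; b; c] [:: d; e; f] [:: g; h; k] *m vec3 x y z =
  vec3 (a * x + b * y + c * z) (d * x + e * y + f * z) (g * x + h * y + k * z).
Proof.
apply/matrixP => i j; rewrite !mxE !big_ord_recr big_ord0 /= !mxE /=.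
by case: i => [[|[|[|]]]] //= _; rewrite add0r.
Qed.

End Coordinates.

Section RiemannianNorm.
Variable R : realType.
Implicit Types (p : pt R) (v : vec R).

Lemma nrm_vec3 p (a b c : R) :
  nrm p (vec3 a b c) = Num.sqrt (a ^+ 2 + b ^+ 2 + (c - p.1.2 * a) ^+ 2).
Proof. by rewrite /nrm !mxE. Qed.

Lemma nrmZ p (t : R) v : nrm p (t *: v) = `|t| * nrm p v.
Proof.
rewrite /nrm !mxE -sqrtr_sqr -sqrtrM ?sqr_ge0 //; congr Num.sqrt; ring.
Qed.

Lemma nrm_ge0 p v : 0 <= nrm p v.
Proof. exact: sqrtr_ge0. Qed.

Lemma nrm_gt0 p v : v != 0 -> 0 < nrm p v.
Proof.
move=> v0; rewrite /nrm sqrtr_gt0 lt_def !addr_ge0 ?sqr_ge0 // andbT.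
apply: contra v0; set a := v 0 0; set b := v 1 0; set d := v 2 0 - p.1.2 * a.
rewrite !paddr_eq0 ?addr_ge0 ?sqr_ge0 // !sqrf_eq0 => /andP[/andP[/eqP a0 /eqP b0] /eqP d0].
have c0 : v 2 0 = 0 by move: d0; rewrite /d a0 mulr0 subr0.
by apply/eqP; rewrite [v]vec3_eta -/a -/b a0 b0 c0 vec3_0.
Qed.

Lemma nrm_cvg p (w : nat -> vec R) v :
  (forall i, (fun n => w n i 0) @ \oo --> v i 0) ->
  (fun n => nrm p (w n)) @ \oo --> nrm p v.
Proof.
move=> wv; rewrite /nrm; apply: continuous_cvg; first exact: sqrt_continuous.
have sq (f : nat -> R) (l : R) : f @ \oo --> l -> (fun n => f n ^+ 2) @ \oo --> l ^+ 2.
  by move=> fl; rewrite expr2; under eq_fun do rewrite expr2; exact: cvgM.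
by apply: cvgD; [apply: cvgD|]; apply: sq => //; apply: cvgB => //; apply: cvgMr.
Qed.

End RiemannianNorm.

Section LineFields.
Variable R : realType.
Implicit Types (p : pt R) (u v : vec R) (e : pt R -> vec R) (A : cocycle R).

Definition cont_field e := forall i, continuous (fun q : (R * R) * R => e q i 0).

Definition right_equivariant e := forall p g, DRmul g *m e p = e (hmul p g).

Definition exact_rate A (E : line_field R) (r : R) :=
  forall p n v, E p v -> nrm (iter n (@Phi R) p) (cociter A n p *m v) = r ^+ n * nrm p v.

Lemma span1_img (M : mat R) u : [set M *m v | v in span1 u] = span1 (M *m u).
Proof.
apply/seteqP; split => w.
- by move=> [v [t _ <-] <-]; exists t => //; rewrite scalemxAr.
- by move=> [t _ <-]; exists (t *: u); [exists t | rewrite scalemxAr].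
Qed.

Lemma span1Z (t : R) u : t != 0 -> span1 (t *: u) = span1 u.
Proof.
move=> t0; apply/seteqP; split => w [r _ <-].
- by exists (r * t) => //; rewrite scalerA.
- by exists (r / t) => //; rewrite scalerA divfK.
Qed.

Lemma span1_sum u v :
  [set a + b | a in span1 u & b in span1 v] = span2 u v.
Proof.
apply/seteqP; split => w.
- by case=> _ [s _ <-] [_ [t _ <-] <-]; exists s => //; exists t.
- by case=> s _ [t _ <-]; exists (s *: u); [exists s | exists (t *: v); [exists t|]].
Qed.

Lemma cont_line_bundle_span1 e :
  cont_field e -> (forall p, e p != 0) -> right_equivariant e ->
  cont_line_bundle (fun p => span1 (e p)).
Proof.
move=> ce e0 eqe; split=> [p|p a1 a2 k]; last by rewrite span1_img eqe.
by exists setT; [exact: filterT | exists e].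
Qed.

Lemma right_invariant_field (e : pt R -> vec R) (a b k : R) :
  (forall q, e q = vec3 a b (q.1.2 * a + k)) -> cont_field e /\ right_equivariant e.
Proof.
move=> eE; rewrite (funext eE); split => [i q|p g]; last first.
  by rewrite /DRmul mul_mat3_vec3 /hmul /=; congr vec3; ring.
under eq_fun do rewrite mxE; case: i => [[|[|[|]]]] //= _; try exact: cvg_cst.
have x2 : (fun q : (R * R) * R => q.1.2) @ q --> q.1.2.
  by apply: (@cvg_comp _ _ _ fst snd (nbhs q) (nbhs q.1)); [exact: cvg_fst | exact: cvg_snd].
by apply: cvgD; [apply: cvgMl | exact: cvg_cst].
Qed.

Lemma cont_field_cst (v : vec R) : cont_field (fun=> v).
Proof. by move=> i q; exact: cvg_cst. Qed.

Lemma cociter_eigen A e (r : R) :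
  (forall p, A p *m e p = r *: e (Phi p)) ->
  forall n p, cociter A n p *m e p = r ^+ n *: e (iter n (@Phi R) p).
Proof.
move=> Ae; elim=> [|n IH] p /=; first by rewrite mul1mx scale1r.
by rewrite -mulmxA IH -scalemxAr Ae scalerA -exprSr.
Qed.

Lemma invariant_span1 A e (r : R) :
  (forall p, A p *m e p = r *: e (Phi p)) -> r != 0 ->
  Defs.invariant A (fun p => span1 (e p)).
Proof. by move=> Ae r0 p; rewrite span1_img Ae span1Z. Qed.

Lemma exact_rate_span1 A e (r : R) :
  (forall p, A p *m e p = r *: e (Phi p)) ->
  (forall p q, nrm p (e p) = nrm q (e q)) -> 0 < r ->
  exact_rate A (fun p => span1 (e p)) r.
Proof.
move=> Ae en r0 p n _ [t _ <-].
rewrite -scalemxAr (cociter_eigen Ae) scalerA !nrmZ normrM normrX (gtr0_norm r0).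
by rewrite (en _ p); ring.
Qed.

Lemma part_hyp_exact_rates A (Es Ec Eu : line_field R) (s c u : R) :
  cont_line_bundle Es -> cont_line_bundle Ec -> cont_line_bundle Eu ->
  Defs.invariant A Es -> Defs.invariant A Ec -> Defs.invariant A Eu ->
  (forall p v, exists a b w, [/\ Es p a, Ec p b, Eu p w & v = a + b + w]) ->
  (forall p a b w, Es p a -> Ec p b -> Eu p w -> a + b + w = 0 ->
     [/\ a = 0, b = 0 & w = 0]) ->
  exact_rate A Es s -> exact_rate A Ec c -> exact_rate A Eu u ->
  0 < s -> s < 1 -> s < c -> c < u -> 1 < u ->
  part_hyp A Es Ec Eu.
Proof.
move=> Bs Bc Bu Is Ic Iu span free rs rc ru s0 s1 sc cu u1.
have c0 : 0 < c by lra.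
have u0 : 0 < u by lra.
have [cn0 un0] : c != 0 /\ u != 0 by rewrite !gt_eqF.
pose lam := Num.max (Num.max s u^-1) (Num.max (s / c) (c / u)).
have lam_ge_s : s <= lam by rewrite !le_max lexx.
have lam_u : 1 <= lam * u.
  by rewrite -(mulVf un0) (ler_wpM2r (ltW u0)) // !le_max lexx orbT.
have lam_sc : s <= lam * c.
  by rewrite -[s in s <= _](divfK cn0) (ler_wpM2r (ltW c0)) // !le_max lexx !orbT.
have lam_cu : c <= lam * u.
  by rewrite -[c in c <= _](divfK un0) (ler_wpM2r (ltW u0)) // !le_max lexx !orbT.
have lam1 : lam < 1.
  by rewrite !gt_max s1 invf_lt1 // u1 !ltr_pdivrMr // !mul1r sc cu.
have pow_le (x y : R) n : 0 <= x -> x <= y -> x ^+ n <= y ^+ n.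
  by move=> x0 xy; rewrite lerXn2r // nnegrE (le_trans x0).
split => //; exists 1, lam; split => //; first by lra.
move=> p n.
have dominated (x y a b : R) : 0 <= x -> x <= lam * y -> 0 <= a -> 0 <= b ->
    x ^+ n * a * b <= 1 * lam ^+ n * (y ^+ n * b * a).
  move=> x0 xy a0 b0; have := pow_le _ _ n x0 xy; rewrite exprMn => xyn.
  have := mulr_ge0 a0 b0; nra.
split; [|split; [|split]].
- move=> v Ev; rewrite (rs p n v Ev) mul1r ler_wpM2r ?nrm_ge0 //.
  exact: pow_le (ltW s0) _.
- move=> v Ev; rewrite (ru p n v Ev) mul1r mulrA -exprMn.
  by rewrite -{1}[nrm p v]mul1r ler_wpM2r ?nrm_ge0 // -(expr1n _ n) pow_le.
- move=> v w Ev Ew; rewrite (rs p n v Ev) (rc p n w Ew).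
  by apply: dominated; rewrite ?nrm_ge0 // ltW.
- move=> v w Ev Ew; rewrite (rc p n v Ev) (ru p n w Ew).
  by apply: dominated; rewrite ?nrm_ge0 // ltW.
Qed.

End LineFields.

Section Frames.
Variable R : realType.
Implicit Types (p : pt R) (e f : pt R -> vec R).

Definition comb (e0 e1 e2 : pt R -> vec R) p (x y z : R) : vec R :=
  x *: e0 p + y *: e1 p + z *: e2 p.

Definition invariant_frame (e0 e1 e2 : pt R -> vec R) : Prop :=
  [/\ forall p v, exists x y z, v = comb e0 e1 e2 p x y z,
      forall p x y z, comb e0 e1 e2 p x y z = 0 -> [/\ x = 0, y = 0 & z = 0],
      forall p q x y z, nrm p (comb e0 e1 e2 p x y z) = nrm q (comb e0 e1 e2 q x y z),
      [/\ cont_field e0, cont_field e1 & cont_field e2] &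
      [/\ right_equivariant e0, right_equivariant e1 & right_equivariant e2]].

Lemma comb_units e0 e1 e2 p :
  [/\ comb e0 e1 e2 p 1 0 0 = e0 p, comb e0 e1 e2 p 0 1 0 = e1 p
    & comb e0 e1 e2 p 0 0 1 = e2 p].
Proof. by rewrite /comb !scale1r !scale0r !add0r !addr0. Qed.

Lemma combZ e0 e1 e2 p (t x y z : R) :
  t *: comb e0 e1 e2 p x y z = comb e0 e1 e2 p (t * x) (t * y) (t * z).
Proof. by rewrite /comb !scalerDr !scalerA. Qed.

Lemma mulmx_comb (M : mat R) e0 e1 e2 p x y z :
  M *m comb e0 e1 e2 p x y z =
  x *: (M *m e0 p) + y *: (M *m e1 p) + z *: (M *m e2 p).
Proof. by rewrite /comb !mulmxDr !scalemxAr. Qed.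

Lemma nrm_comb_cvg e0 e1 e2 p (x y z : nat -> R) (a b c : R) :
  x @ \oo --> a -> y @ \oo --> b -> z @ \oo --> c ->
  (fun n => nrm p (comb e0 e1 e2 p (x n) (y n) (z n))) @ \oo --> nrm p (comb e0 e1 e2 p a b c).
Proof.
move=> xa yb zc; apply: nrm_cvg => i; rewrite !mxE; under eq_fun do rewrite !mxE.
by apply: cvgD; [apply: cvgD|]; apply: cvgMl.
Qed.

Lemma cont_field_lincomb (a b : R) f1 f2 :
  cont_field f1 -> cont_field f2 -> cont_field (fun p => a *: f1 p + b *: f2 p).
Proof.
move=> c1 c2 i; under eq_fun do rewrite !mxE.
by move=> q; apply: cvgD; apply: cvgMr; [exact: c1 | exact: c2].
Qed.

Lemma right_equivariant_lincomb (a b : R) f1 f2 :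
  right_equivariant f1 -> right_equivariant f2 ->
  right_equivariant (fun p => a *: f1 p + b *: f2 p).
Proof. by move=> r1 r2 p g; rewrite mulmxDr -!scalemxAr r1 r2. Qed.

Lemma comb_lincomb f0 f1 f2 e1 e2 (a1 b1 a2 b2 : R) p x y z :
  e1 p = a1 *: f1 p + b1 *: f2 p -> e2 p = a2 *: f1 p + b2 *: f2 p ->
  comb f0 e1 e2 p x y z = comb f0 f1 f2 p x (y * a1 + z * a2) (y * b1 + z * b2).
Proof.
move=> E1 E2; rewrite /comb E1 E2 !scalerDr !scalerDl !scalerA -!addrA; congr (_ + _).
by congr (_ + _); rewrite addrCA.
Qed.

Lemma invariant_frame_change f0 f1 f2 e1 e2 (a1 b1 a2 b2 : R) :
  invariant_frame f0 f1 f2 -> a1 * b2 - a2 * b1 != 0 ->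
  (forall p, e1 p = a1 *: f1 p + b1 *: f2 p) ->
  (forall p, e2 p = a2 *: f1 p + b2 *: f2 p) ->
  invariant_frame f0 e1 e2.
Proof.
move=> [span free iso [c0 c1 c2] [r0 r1 r2]] det E1 E2.
have combE p x y z := comb_lincomb f0 x y z (E1 p) (E2 p).
split.
- move=> p v; have [x [y [z ->]]] := span p v.
  exists x, ((y * b2 - z * a2) / (a1 * b2 - a2 * b1)), ((z * a1 - y * b1) / (a1 * b2 - a2 * b1)).
  by rewrite combE; congr (comb _ _ _ _ _ _ _); field.
- move=> p x y z; rewrite combE => /free [-> Ey Ez].
  have y0 : y * (a1 * b2 - a2 * b1) = b2 * (y * a1 + z * a2) - a2 * (y * b1 + z * b2).
    by ring.
  have z0 : z * (a1 * b2 - a2 * b1) = a1 * (y * b1 + z * b2) - b1 * (y * a1 + z * a2).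
    by ring.
  rewrite Ey Ez !mulr0 subr0 in y0 z0.
  by move/eqP: y0; move/eqP: z0; rewrite !mulf_eq0 (negbTE det) !orbF => /eqP -> /eqP ->.
- by move=> p q x y z; rewrite !combE (iso p q).
- by rewrite (funext E1) (funext E2); split => //; apply: cont_field_lincomb.
- by rewrite (funext E1) (funext E2); split => //; apply: right_equivariant_lincomb.
Qed.

Definition block_action (A : cocycle R) f0 f1 f2 (r k11 k12 k21 k22 : R) :=
  forall p x y z, A p *m comb f0 f1 f2 p x y z =
    comb f0 f1 f2 (Phi p) (r * x) (k11 * y + k12 * z) (k21 * y + k22 * z).

Lemma block_action_f0 A f0 f1 f2 (r k11 k12 k21 k22 : R) :
  block_action A f0 f1 f2 r k11 k12 k21 k22 -> forall p, A p *m f0 p = r *: f0 (Phi p).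
Proof.
move=> Ablk p; have [E0 _ _] := comb_units f0 f1 f2 p; rewrite -E0 Ablk.
by rewrite !mulr0 mulr1 addr0 /comb !scale0r !addr0.
Qed.

Lemma block_action_eigen A f0 f1 f2 (r k11 k12 k21 k22 a b m : R) :
  block_action A f0 f1 f2 r k11 k12 k21 k22 ->
  k11 * a + k12 * b = m * a -> k21 * a + k22 * b = m * b ->
  forall p, A p *m (a *: f1 p + b *: f2 p) = m *: (a *: f1 (Phi p) + b *: f2 (Phi p)).
Proof.
move=> Ablk Ea Eb p; have := Ablk p 0 a b.
by rewrite /comb !scale0r !add0r mulr0 scale0r add0r Ea Eb scalerDr !scalerA.
Qed.

End Frames.

Section LyapunovLimits.
Variable R : realType.

Lemma cvg_invn : (fun n : nat => (n%:R : R)^-1) @ \oo --> (0 : R).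
Proof.
have := @cvgr_idn R; rewrite -(@gtr0_cvgV0 _ _ _ _ (fun n : nat => (n%:R : R))) //.
by near=> n; rewrite ltr0n; near: n; exists 1%N.
Unshelve. all: by end_near.
Qed.

Lemma cvg_ln_powM (rho l : R) (h : nat -> R) :
  0 < rho -> 0 < l -> h @ \oo --> l ->
  (fun n : nat => n%:R^-1 * ln (rho ^+ n * h n)) @ \oo --> ln rho.
Proof.
move=> rho0 l0 hl.
have lnh : (fun n : nat => n%:R^-1 * ln (h n)) @ \oo --> (0 : R).
  rewrite -(mul0r (ln l)); apply: cvgM; first exact: cvg_invn.
  exact: (cvg_comp _ _ hl (continuous_ln l0)).
rewrite -[ln rho]addr0; apply: cvg_trans (cvgD (cvg_cst (ln rho)) lnh).
apply: near_eq_cvg; near=> n.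
have hn : 0 < h n by near: n; exact: (cvgr_gt _ hl _ l0).
rewrite lnM ?posrE ?exprn_gt0 // lnXn // mulrDr -[ln rho *+ n]mulr_natl mulrA mulVf ?mul1r //.
by rewrite pnatr_eq0 -lt0n; near: n; exists 1%N.
Unshelve. all: by end_near.
Qed.

Lemma cvg_pow_ratio_lt (x r rho : R) :
  0 <= r -> r < rho -> (fun n : nat => x * (r / rho) ^+ n) @ \oo --> (0 : R).
Proof.
move=> r0 lt_r; have rho0 : 0 < rho := le_lt_trans r0 lt_r.
by apply: cvg_geometric; rewrite ger0_norm ?divr_ge0 ?(ltW rho0) // ltr_pdivrMr // mul1r.
Qed.

Lemma cvg_pow_ratio_eq (x rho : R) :
  rho != 0 -> (fun n : nat => x * (rho / rho) ^+ n) @ \oo --> x.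
Proof.
by move=> rho0; under eq_fun do rewrite divff // expr1n mulr1; exact: cvg_cst.
Qed.

End LyapunovLimits.

Section EigenFrame.
Variable R : realType.
Variables (A : cocycle R) (e0 e1 e2 : pt R -> vec R) (s c u : R).
Hypothesis frameE : invariant_frame e0 e1 e2.
Hypotheses (A_e0 : forall p, A p *m e0 p = s *: e0 (Phi p))
  (A_e1 : forall p, A p *m e1 p = c *: e1 (Phi p))
  (A_e2 : forall p, A p *m e2 p = u *: e2 (Phi p)).
Hypotheses (s_gt0 : 0 < s) (s_lt_c : s < c) (c_lt_u : c < u).

Local Notation comb := (comb e0 e1 e2).

Let c_gt0 : 0 < c. Proof. exact: lt_trans s_lt_c. Qed.
Let u_gt0 : 0 < u. Proof. exact: lt_trans c_lt_u. Qed.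

Lemma eigenframe_part_hyp : s < 1 -> 1 < u ->
  part_hyp A (fun p => span1 (e0 p)) (fun p => span1 (e1 p)) (fun p => span1 (e2 p)).
Proof.
move=> s_lt1 u_gt1; case: frameE => span free iso [c0 c1 c2] [r0 r1 r2].
have e_neq0 p : [/\ e0 p != 0, e1 p != 0 & e2 p != 0].
  have [E0 E1 E2] := comb_units e0 e1 e2 p; split; apply/eqP => E.
  - by case: (free p 1 0 0 (etrans E0 E)) => /eqP; rewrite oner_eq0.
  - by case: (free p 0 1 0 (etrans E1 E)) => _ /eqP; rewrite oner_eq0.
  - by case: (free p 0 0 1 (etrans E2 E)) => _ _ /eqP; rewrite oner_eq0.
have e_iso p q : [/\ nrm p (e0 p) = nrm q (e0 q), nrm p (e1 p) = nrm q (e1 q)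
    & nrm p (e2 p) = nrm q (e2 q)].
  have [P0 P1 P2] := comb_units e0 e1 e2 p; have [Q0 Q1 Q2] := comb_units e0 e1 e2 q.
  by rewrite -P0 -Q0 -P1 -Q1 -P2 -Q2 !(iso p q).
apply: (part_hyp_exact_rates (s := s) (c := c) (u := u)) => //.
- by apply: cont_line_bundle_span1 => // p; case: (e_neq0 p).
- by apply: cont_line_bundle_span1 => // p; case: (e_neq0 p).
- by apply: cont_line_bundle_span1 => // p; case: (e_neq0 p).
- by apply: invariant_span1 A_e0 _; rewrite gt_eqF.
- by apply: invariant_span1 A_e1 _; rewrite gt_eqF.
- by apply: invariant_span1 A_e2 _; rewrite gt_eqF.
- move=> p v; have [x [y [z ->]]] := span p v.
  by exists (x *: e0 p), (y *: e1 p), (z *: e2 p); split; [exists x|exists y|exists z|].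
- move=> p _ _ _ [x _ <-] [y _ <-] [z _ <-] /(free p) [-> -> ->].
  by rewrite !scale0r.
- by apply: exact_rate_span1 A_e0 _ s_gt0 => p q; case: (e_iso p q).
- by apply: exact_rate_span1 A_e1 _ c_gt0 => p q; case: (e_iso p q).
- by apply: exact_rate_span1 A_e2 _ u_gt0 => p q; case: (e_iso p q).
Qed.

Lemma cociter_comb n p x y z :
  cociter A n p *m comb p x y z =
  comb (iter n (@Phi R) p) (x * s ^+ n) (y * c ^+ n) (z * u ^+ n).
Proof.
by rewrite mulmx_comb (cociter_eigen A_e0) (cociter_eigen A_e1) (cociter_eigen A_e2) !scalerA.
Qed.

Lemma lyapunov_comb p x y z (rho k0 k1 k2 : R) :
  0 < rho -> comb p k0 k1 k2 != 0 ->
  (fun n : nat => x * (s / rho) ^+ n) @ \oo --> k0 ->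
  (fun n : nat => y * (c / rho) ^+ n) @ \oo --> k1 ->
  (fun n : nat => z * (u / rho) ^+ n) @ \oo --> k2 ->
  (fun n : nat => n%:R^-1 * ln (nrm (iter n (@Phi R) p) (cociter A n p *m comb p x y z)))
    @ \oo --> ln rho.
Proof.
move=> rho0 k_neq0 K0 K1 K2; case: frameE => _ _ iso _ _.
have rescale n : nrm (iter n (@Phi R) p) (cociter A n p *m comb p x y z) =
    rho ^+ n * nrm p (comb p (x * (s / rho) ^+ n) (y * (c / rho) ^+ n) (z * (u / rho) ^+ n)).
  have rhon : 0 < rho ^+ n by rewrite exprn_gt0.
  rewrite cociter_comb (iso _ p) -[rho ^+ n]gtr0_norm // -nrmZ combZ !expr_div_n.
  by congr (nrm p (comb p _ _ _)); field; rewrite gt_eqF.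
under eq_fun do rewrite rescale.
apply: (cvg_ln_powM rho0 (nrm_gt0 p k_neq0)); exact: nrm_comb_cvg.
Qed.

Lemma eigenframe_nonunif : s != 1 -> c != 1 -> u != 1 -> nonunif_hyp A.
Proof.
move=> s1 c1 u1; case: frameE => span free _ _ _.
have ln_neq0 r : 0 < r -> r != 1 -> ln r != 0 by move=> r0; rewrite ln_eq0.
have zero_seq w : (fun n : nat => 0 * w ^+ n) @ \oo --> (0 : R).
  by under eq_fun do rewrite mul0r; exact: cvg_cst.
have comb_neq0 p x y z : (x != 0) || (y != 0) || (z != 0) -> comb p x y z != 0.
  by move=> xyz; apply/eqP => /free [x0 y0 z0]; move: xyz; rewrite x0 y0 z0 eqxx.
apply: aeW => p _ v v0; have [x [y [z vE]]] := span p v; rewrite vE.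
have [z0|z0] := eqVneq z 0; last first.
  exists (ln u); split; first exact: ln_neq0.
  apply: (lyapunov_comb (k0 := 0) (k1 := 0) (k2 := z) u_gt0).
  - by rewrite comb_neq0 // z0 !orbT.
  - exact: cvg_pow_ratio_lt (ltW s_gt0) (lt_trans s_lt_c c_lt_u).
  - exact: cvg_pow_ratio_lt (ltW c_gt0) c_lt_u.
  - by apply: cvg_pow_ratio_eq; rewrite gt_eqF.
have [y0|y0] := eqVneq y 0; last first.
  exists (ln c); split; first exact: ln_neq0.
  apply: (lyapunov_comb (k0 := 0) (k1 := y) (k2 := 0) c_gt0).
  - by rewrite comb_neq0 // y0 orbT.
  - exact: cvg_pow_ratio_lt (ltW s_gt0) s_lt_c.
  - by apply: cvg_pow_ratio_eq; rewrite gt_eqF.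
  - by rewrite z0; exact: zero_seq.
have x0 : x != 0.
  by apply: contra_neq v0 => x0; rewrite vE x0 y0 z0 /comb !scale0r !addr0.
exists (ln s); split; first exact: ln_neq0.
apply: (lyapunov_comb (k0 := x) (k1 := 0) (k2 := 0) s_gt0).
- by rewrite comb_neq0 // x0.
- by apply: cvg_pow_ratio_eq; rewrite gt_eqF.
- by rewrite y0; exact: zero_seq.
- by rewrite z0; exact: zero_seq.
Qed.

End EigenFrame.

Section HeisenbergFrame.
Variables (R : realType) (q1 q2 : R).

Local Notation hcomb := (comb (@ws R) (v2 q1 q2) (fun=> v1 R)).

Lemma hcombE p x y z : hcomb p x y z =
  vec3 (x + y * q1) (x * (lam_s R - 2) + y * q2) (p.1.2 * x + p.1.2 * q1 * y + z).
Proof. by rewrite /comb /ws /v2 /v1 !vec3Z !vec3D; congr vec3; ring. Qed.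

Lemma heisenberg_frame : q2 - (lam_s R - 2) * q1 != 0 ->
  invariant_frame (@ws R) (v2 q1 q2) (fun=> v1 R).
Proof.
set D := q2 - _ => D0.
have [c0 r0] : cont_field (@ws R) /\ right_equivariant (@ws R).
  by apply: (@right_invariant_field R _ 1 (lam_s R - 2) 0) => q; rewrite addr0.
have [c1 r1] : cont_field (v2 q1 q2) /\ right_equivariant (v2 q1 q2).
  by apply: (@right_invariant_field R _ q1 q2 0) => q; rewrite addr0.
have [_ r2] : cont_field (fun=> v1 R) /\ right_equivariant (fun=> v1 R).
  by apply: (@right_invariant_field R _ 0 0 1) => q; rewrite mulr0 add0r.
split.
- move=> p v; rewrite [v]vec3_eta; set d := (v 1 0 - (lam_s R - 2) * v 0 0) / D.
  exists (v 0 0 - q1 * d), d, (v 2 0 - p.1.2 * v 0 0).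
  by rewrite hcombE /d /D; congr vec3; field.
- move=> p x y z; rewrite hcombE -vec3_0 => /vec3_inj [Ea Eb Ec].
  have yD : y * D = x * (lam_s R - 2) + y * q2 - (lam_s R - 2) * (x + y * q1) by rewrite /D; ring.
  rewrite Ea Eb mulr0 subr0 in yD; move/eqP: yD; rewrite mulf_eq0 (negbTE D0) orbF => /eqP y0.
  have x0 : x = 0 by rewrite -Ea y0 mul0r addr0.
  by split => //; rewrite -Ec x0 y0 !mulr0 !addr0 add0r.
- by move=> p q x y z; rewrite !hcombE !nrm_vec3; congr (Num.sqrt (_ + _ ^+ 2)); ring.
- by split; [| | exact: cont_field_cst].
- by [].
Qed.

Lemma frame_mat3 p : frame q1 q2 p =
  mat3 [:: 1; q1; 0] [:: lam_s R - 2; q2; 0] [:: p.1.2 * 1; p.1.2 * q1; 1].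
Proof.
apply/matrixP => i j; rewrite !mxE.
by case: i => [[|[|[|]]]] //= _; case: j => [[|[|[|]]]] //= _; rewrite !mxE.
Qed.

Lemma frame_vec3 p x y z : frame q1 q2 p *m vec3 x y z = hcomb p x y z.
Proof. by rewrite frame_mat3 mul_mat3_vec3 hcombE; congr vec3; ring. Qed.

Lemma frame_unit p : q2 - (lam_s R - 2) * q1 != 0 -> frame q1 q2 p \in unitmx.
Proof.
set D := q2 - _ => D0.
suff /mulmx1_unit [] : frame q1 q2 p *m mat3 [:: q2 / D; - q1 / D; 0]
    [:: - (lam_s R - 2) / D; 1 / D; 0] [:: - p.1.2; 0; 1] = 1%:M by [].
rewrite frame_mat3; apply/matrixP => i j; rewrite !mxE !big_ord_recr big_ord0 /= !mxE /=.
by case: i => [[|[|[|]]]] //= Hi; case: j => [[|[|[|]]]] //= Hj; rewrite /D; field.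
Qed.

Lemma Ftheta_comb th p x y z : q2 - (lam_s R - 2) * q1 != 0 ->
  Ftheta q1 q2 th p *m hcomb p x y z =
  DPhi p *m hcomb p x (cos th * y - sin th * z) (sin th * y + cos th * z).
Proof.
move=> D0; rewrite -!frame_vec3 /Ftheta -!mulmxA mulKmx ?frame_unit //.
by rewrite /Rblk mul_mat3_vec3; congr (_ *m (_ *m vec3 _ _ _)); ring.
Qed.

End HeisenbergFrame.

Lemma lam_s_of_root (R : realType) (l : R) : 1 < l -> l * l = 3 * l - 1 ->
  [/\ lam_s R = 3 - l, 0 < 3 - l & 3 - l < 1].
Proof.
move=> l1 lsq; have l32 : 0 < 2 * l - 3 by nra.
have sqrt5 : Num.sqrt (5 : R) = 2 * l - 3.
  by rewrite -[5 : R](_ : (2 * l - 3) ^+ 2 = 5) ?sqrtr_sqr ?gtr0_norm // expr2; nra.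
by rewrite /lam_s sqrt5; split; nra.
Qed.

(* diag(lam_u, 1) R_theta has trace (lam_u + 1) cos theta and determinant lam_u. *)
Lemma rotation_block_roots (R : realType) (l c : R) :
  1 < l -> l * l = 3 * l - 1 -> 9 / 10 < c -> c < 1 ->
  exists mc mu : R, [/\ 1 < mc, mc < mu,
    mc * mc = (l + 1) * c * mc - l & mu * mu = (l + 1) * c * mu - l].
Proof.
move=> l1 lsq c9 c1; set t := (l + 1) * c.
have tt : t * t = 5 * l * (c * c).
  have lc : l * l * (c * c) = (3 * l - 1) * (c * c) by rewrite lsq.
  rewrite /t; lra.
have t2 : 2 < t by rewrite /t; nra.
have tl : t < l + 1 by rewrite /t; nra.
have cc : 4 / 5 < c * c by nra.
have disc : 0 < t * t - 4 * l by rewrite tt; nra.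
set r := Num.sqrt (t * t - 4 * l).
have r0 : 0 < r by rewrite sqrtr_gt0.
have rr : r * r = t * t - 4 * l by rewrite -expr2 sqr_sqrtr // ltW.
have rt : r < t - 2 by nra.
by exists ((t - r) / 2), ((t + r) / 2); split; lra.
Qed.

Section CatMapCocycles.
Variables (R : realType) (q1 q2 lamu : R).
Hypotheses (lamu_gt1 : 1 < lamu) (q_neq0 : (q1, q2) != (0, 0))
  (eig1 : 2 * q1 + q2 = lamu * q1) (eig2 : q1 + q2 = lamu * q2).

Local Notation hcomb := (comb (@ws R) (v2 q1 q2) (fun=> v1 R)).

Let q2E : q2 = (lamu - 2) * q1. Proof. by rewrite mulrBl -eig1; ring. Qed.

Let q1_neq0 : q1 != 0.
Proof. by apply: contraNneq q_neq0 => q10; rewrite q2E q10 mulr0. Qed.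

Let lamu_sq : lamu * lamu = 3 * lamu - 1.
Proof.
have : q1 * (lamu * lamu - 3 * lamu + 1) = lamu * q2 - (q1 + q2) by rewrite q2E; ring.
by rewrite -eig2 subrr => /eqP; rewrite mulf_eq0 (negbTE q1_neq0) /= => /eqP; lra.
Qed.

Let lam_s_facts : [/\ lam_s R = 3 - lamu, 0 < lam_s R & lam_s R < 1].
Proof.
have [lE l0 l1] := lam_s_of_root lamu_gt1 lamu_sq; by rewrite lE.
Qed.

Let frame_det : q2 - (lam_s R - 2) * q1 != 0.
Proof.
have [lE _ ls1] := lam_s_facts; rewrite lE in ls1.
rewrite q2E lE -mulrBl mulf_neq0 //; apply/eqP => /eqP; rewrite subr_eq0 => /eqP; lra.
Qed.

Lemma DPhi_block :
  block_action (@DPhi R) (@ws R) (v2 q1 q2) (fun=> v1 R) (lam_s R) lamu 0 0 1.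
Proof.
have [lE _ _] := lam_s_facts.
move=> p x y z; rewrite !hcombE /DPhi mul_mat3_vec3 /Phi /= q2E; congr vec3; try ring.
apply/eqP; rewrite -subr_eq0 lE.
rewrite (_ : _ - _ = (3 * lamu - 1 - lamu * lamu) * (x + y * q1)); last by ring.
by rewrite lamu_sq subrr mul0r.
Qed.

Lemma Ftheta_block th : block_action (Ftheta q1 q2 th) (@ws R) (v2 q1 q2) (fun=> v1 R)
  (lam_s R) (lamu * cos th) (- (lamu * sin th)) (sin th) (cos th).
Proof.
move=> p x y z; rewrite Ftheta_comb // DPhi_block /comb.
by congr (_ + _ + _); congr (_ *: _); ring.
Qed.

Lemma Df_part_hyp :
  exists Ec Eu : line_field R,
    part_hyp (@DPhi R) (@Es_f R) Ec Eu /\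
    forall p : pt R, [set a + b | a in Ec p & b in Eu p] = span2 (v1 R) (v2 q1 q2 p).
Proof.
have [_ ls0 ls1] := lam_s_facts.
have Ev1 p : 0 *: v2 q1 q2 p + 1 *: v1 R = v1 R by rewrite scale0r add0r scale1r.
have Ev2 p : 1 *: v2 q1 q2 p + 0 *: v1 R = v2 q1 q2 p by rewrite scale0r addr0 scale1r.
have frameE : invariant_frame (@ws R) (fun=> v1 R) (v2 q1 q2).
  apply: (invariant_frame_change (heisenberg_frame frame_det) _ (fun p => esym (Ev1 p))
    (fun p => esym (Ev2 p))).
  by rewrite mul0r sub0r mulr1 oppr_eq0 oner_eq0.
have A1 p : DPhi p *m v1 R = 1 *: v1 R.
  rewrite -(Ev1 p) (block_action_eigen (a := 0) (b := 1) (m := 1) DPhi_block) ?Ev1 //; ring.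
have A2 p : DPhi p *m v2 q1 q2 p = lamu *: v2 q1 q2 (Phi p).
  rewrite -(Ev2 p) (block_action_eigen (a := 1) (b := 0) (m := lamu) DPhi_block) ?Ev2 //; ring.
exists (fun=> span1 (v1 R)), (fun p => span1 (v2 q1 q2 p)); split => [|p]; last exact: span1_sum.
apply: (eigenframe_part_hyp frameE (block_action_f0 DPhi_block) A1 A2) => //; lra.
Qed.

Lemma Ftheta_hyperbolic th : 0 < sin th -> 9 / 10 < cos th ->
  (exists Es Ec Eu : line_field R, part_hyp (Ftheta q1 q2 th) Es Ec Eu) /\
  nonunif_hyp (Ftheta q1 q2 th).
Proof.
move=> s0 c9; have [_ ls0 ls1] := lam_s_facts; have cs := cos2Dsin2 th.
have c1 : cos th < 1 by nra.
have [mc [mu [mc1 mcmu Emc Emu]]] := rotation_block_roots lamu_gt1 lamu_sq c9 c1.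
set c := cos th in c9 c1 cs Emc Emu *; set s := sin th in s0 cs *.
have det : (mc - c) * s - (mu - c) * s != 0.
  by apply/eqP => /eqP; rewrite -mulrBl mulf_eq0 => /orP[]/eqP; lra.
have frameE := invariant_frame_change (e1 := fun p => (mc - c) *: v2 q1 q2 p + s *: v1 R)
  (e2 := fun p => (mu - c) *: v2 q1 q2 p + s *: v1 R) (heisenberg_frame frame_det) det
  (fun=> erefl) (fun=> erefl).
have eigen m : m * m = (lamu + 1) * c * m - lamu ->
    forall p, Ftheta q1 q2 th p *m ((m - c) *: v2 q1 q2 p + s *: v1 R) =
      m *: ((m - c) *: v2 q1 q2 (Phi p) + s *: v1 R).
  move=> Em; apply: (block_action_eigen (Ftheta_block th)); rewrite -/c -/s; last by ring.
  have lcs : lamu * (c ^+ 2 + s ^+ 2) = lamu by rewrite cs mulr1.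
  lra.
have A0 := block_action_f0 (Ftheta_block th).
split.
- exists (fun p => span1 (ws p)), (fun p => span1 ((mc - c) *: v2 q1 q2 p + s *: v1 R)),
    (fun p => span1 ((mu - c) *: v2 q1 q2 p + s *: v1 R)).
  apply: (eigenframe_part_hyp frameE A0 (eigen _ Emc) (eigen _ Emu)) => //; lra.
- apply: (eigenframe_nonunif frameE A0 (eigen _ Emc) (eigen _ Emu)) => //;
    try lra; apply/eqP; lra.
Qed.

End CatMapCocycles.

Theorem corollaryD (R : realType) (q1 q2 lamu : R) :
  1 < lamu ->
  (q1, q2) != (0, 0) ->
  2 * q1 + q2 = lamu * q1 -> q1 + q2 = lamu * q2 ->
  (exists Ec Eu : line_field R,
     part_hyp (@DPhi R) (@Es_f R) Ec Eu /\
     forall p : pt R, [set a + b | a in Ec p & b in Eu p] = span2 (v1 R) (v2 q1 q2 p)) /\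
  (exists I : set R,
     [/\ open I, I !=set0, I `<=` `[0, 2 * pi] &
       forall th, I th ->
         (exists Es Ec Eu : line_field R, part_hyp (Ftheta q1 q2 th) Es Ec Eu) /\
         nonunif_hyp (Ftheta q1 q2 th)]).
Proof.
move=> lamu1 q0 eig1 eig2; split; first exact: (Df_part_hyp lamu1 q0 eig1 eig2).
pose a := acos (9 / 10 : R).
have a_in : (9 / 10 : R) \in `[(-1), 1] by rewrite in_itv /=; apply/andP; split; lra.
have a0 : 0 < a by rewrite acos_gt0 //; apply/andP; split; lra.
have api : a < pi by rewrite acos_ltpi //; apply/andP; split; lra.
have pi0 := pi_ge0 R.
exists [set` `]0, a[]; split.
- exact: itv_open.
- by exists (a / 2); rewrite /= in_itv /=; apply/andP; split; lra.
- by move=> x; rewrite /= !in_itv /= => /andP [x0 xa]; apply/andP; split; lra.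
- move=> th; rewrite /= in_itv /= => /andP [th0 tha].
  apply: (Ftheta_hyperbolic lamu1 q0 eig1 eig2).
  - by rewrite sin_gt0_pi //; apply/andP; split; lra.
  - rewrite (_ : 9 / 10 = cos a); last by rewrite acosK.
    by rewrite ltr_cos // in_itv /=; apply/andP; split; lra.
Qed.
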